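(* Let $P$ be a finite type $\mathbb{N}$-graded upho poset with minimum element $\hat 0$ and rank function $\rho$, and suppose $P$ is a meet semilattice. Then for every integer $m\ge 1$, \[ \sum_{\substack{(p_1,\ldots,p_m)\in P^m,\\ p_1\wedge\cdots\wedge p_m=\hat 0}} x^{\rho(p_1)+\cdots+\rho(p_m)} = F_P(x)^m\cdot F_P(x^m)^{-1} \] as formal power series.
   Context: A poset $P$ is $\mathbb{N}$-graded if $P = P_0\sqcup P_1\sqcup P_2\sqcup\cdots$ (disjoint union) such that every maximal chain has the form $p_0\lessdot p_1\lessdot p_2\lessdot\cdots$ with $p_i\in P_i$ for all $i$. Its rank function $\rho\colon P\to\mathbb{N}$ is $\rho(p)=i$ for $p\in P_i$. $P$ has finite type if $\#P_i<\infty$ for all $i$. The rank generating function is $F_P(x)=\sum_{p\in P}x^{\rho(p)}$. $P$ is upper homogeneous (upho) if for every $p\in P$ the principal order filter $V_p=\{q\in P: q\ge p\}$ is isomorphic as a poset to $P$. A meet semilattice is a poset in which every pair of elements has a greatest lower bound $\wedge$. *)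

From HB Require Import structures.
From mathcomp Require Import all_boot all_order all_algebra finmap.
From mathcomp Require Import boolp classical_sets cardinality.
Set Implicit Arguments. Unset Strict Implicit. Unset Printing Implicit Defensive.
Import Order.TTheory GRing.Theory Num.Theory.
Local Open Scope order_scope.

Section PosetDefs.
Context {d : Order.disp_t} {T : porderType d}.

Definition covers (a b : T) : Prop :=
  a < b /\ ~ (exists c, a < c /\ c < b).

Definition is_chain (C : set T) : Prop :=
  forall x y, C x -> C y -> x <= y \/ y <= x.

Definition maximal_chain (C : set T) : Prop :=
  is_chain C /\ forall D : set T, is_chain D -> (C `<=` D)%classic -> D = C.

Definition N_graded (rho : T -> nat) : Prop :=
  forall C : set T, maximal_chain C ->
    exists c : nat -> T,
      (forall x, C x <-> exists i, c i = x) /\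
      (forall i, covers (c i) (c i.+1) /\ rho (c i) = i).

Definition finite_type (rho : T -> nat) : Prop :=
  forall i, finite_set [set p : T | rho p = i].

Definition filter_of (p : T) : set T := [set q : T | p <= q].

Definition iso_to_filter (p : T) : Prop :=
  exists f : T -> T,
    (forall x, filter_of p (f x)) /\
    (forall q, filter_of p q -> exists x, f x = q) /\
    (forall x y, (x <= y) <-> (f x <= f y)).

Definition upho : Prop := forall p : T, iso_to_filter p.

End PosetDefs.

Definition card_set {U : choiceType} (A : set U) : nat := #|` fset_set A|%fset.

Definition series := nat -> rat.

Local Open Scope ring_scope.

Definition smul (a b : series) : series :=
  fun n => \sum_(i < n.+1) a i * b (n - i)%N.

Definition sone : series := fun n => if n == 0%N then 1 else 0.

Definition spow (a : series) (m : nat) : series := iter m (smul a) sone.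

(* substitution x |-> x^m *)
Definition ssubst_pow (a : series) (m : nat) : series :=
  fun n => if (m %| n)%N then a (n %/ m)%N else 0.

(* multiplicative inverse of a power series with invertible constant term:
   b_0 = a_0^-1, b_n = - a_0^-1 * sum_{k=1}^{n} a_k b_{n-k}.
   inv_list a n = [:: b_n; b_{n-1}; ...; b_0]. *)
Fixpoint inv_list (a : series) (n : nat) : seq rat :=
  match n with
  | 0%N => [:: (a 0%N)^-1]
  | n'.+1 =>
      let l := inv_list a n' in
      (- (a 0%N)^-1 * \sum_(k < n'.+1) a k.+1 * nth 0 l k) :: l
  end.

Definition sinv (a : series) : series := fun n => head 0 (inv_list a n).

Definition rank_gf {d} {T : porderType d} (rho : T -> nat) : series :=
  fun n => (card_set [set p : T | rho p = n])%:R.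

Definition meet_seq {d} {T : meetSemilatticeType d} (s : seq T) (dflt : T) : T :=
  match s with
  | [::] => dflt
  | x :: s' => foldl Order.meet x s'
  end.

Definition meet_zero_gf {d} {T : meetSemilatticeType d} (rho : T -> nat)
    (z : T) (m : nat) : series :=
  fun n => (card_set [set t : m.-tuple T |
              meet_seq t z = z /\ (\sum_(p <- t) rho p)%N = n])%:R.

From mathcomp Require Import all_boot all_order all_algebra finmap.
From mathcomp Require Import boolp classical_sets cardinality.
From mathcomp Require Import zify.
Set Implicit Arguments. Unset Strict Implicit. Unset Printing Implicit Defensive.
Import Order.TTheory GRing.Theory Num.Theory.

(* Every m-tuple of P has a meet q, and an isomorphism P ~ V_q carries the
   m-tuples with meet 0 bijectively onto those with meet q, raising the total
   rank by m * rho q.  Sorting the m-tuples by their meet therefore gives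
   F_P(x)^m = F_P(x^m) * G(x), where G is the left-hand side; F_P(x^m) is
   invertible because 0 is the only element of rank 0. *)

Section Series.
Local Open Scope ring_scope.
Implicit Types a b c : series.

Definition series_trunc a n : {poly rat} := \poly_(i < n.+1) a i.

Lemma coef_series_trunc a n i : (i <= n)%N -> (series_trunc a n)`_i = a i.
Proof. by move=> le_in; rewrite coef_poly ltnS le_in. Qed.

Lemma smul_coefM a b (p q : {poly rat}) n :
  (forall i, (i <= n)%N -> p`_i = a i) -> (forall i, (i <= n)%N -> q`_i = b i) ->
  smul a b n = (p * q)`_n.
Proof.
move=> pE qE; rewrite coefM /smul; apply: eq_bigr => -[i /= lt_in] _.
by rewrite pE // qE // leq_subr.
Qed.

Lemma coef_series_truncM a b n i : (i <= n)%N ->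
  (series_trunc a n * series_trunc b n)`_i = smul a b i.
Proof.
move=> le_in; symmetry; apply: smul_coefM => j le_ji; apply: coef_series_trunc;
  exact: leq_trans le_ji le_in.
Qed.

Lemma smulC a b : smul a b = smul b a.
Proof.
apply: funext => n.
by rewrite -(coef_series_truncM a b (leqnn n)) -(coef_series_truncM b a (leqnn n)) mulrC.
Qed.

Lemma smulA a b c : smul (smul a b) c = smul a (smul b c).
Proof.
apply: funext => n.
rewrite (@smul_coefM _ _ (series_trunc a n * series_trunc b n) (series_trunc c n)).
- rewrite -mulrA; symmetry.
  by apply: smul_coefM => i le_in; [exact: coef_series_trunc | exact: coef_series_truncM].
- exact: coef_series_truncM.
- exact: coef_series_trunc.
Qed.

Lemma smul_sone a : smul a sone = a.
Proof.
apply: funext => n; rewrite (@smul_coefM _ _ (series_trunc a n) 1).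
- by rewrite mulr1 coef_series_trunc.
- exact: coef_series_trunc.
- by move=> i _; rewrite coef1 /sone; case: (i == 0%N).
Qed.

Lemma nth_inv_list a n k : (k <= n)%N -> nth 0 (inv_list a n) k = sinv a (n - k)%N.
Proof. by elim: n k => [|n IHn] [|k] //=; rewrite ltnS subSS => /IHn. Qed.

Lemma smul_sinv a : a 0%N != 0 -> smul a (sinv a) = sone.
Proof.
move=> a0_neq0; apply: funext => -[|n]; rewrite /smul /sone.
  by rewrite big_ord1 /sinv /= mulfV.
rewrite big_ord_recl /= subn0.
have -> : sinv a n.+1 = - (a 0%N)^-1 * \sum_(k < n.+1) a k.+1 * sinv a (n - k)%N.
  rewrite {1}/sinv /=; congr (_ * _); apply: eq_bigr => -[k lt_kn] _ /=.
  by rewrite nth_inv_list.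
rewrite mulrA mulrN mulfV // mulN1r.
under [X in _ + X]eq_bigr => i _ do rewrite /bump /= add1n subSS.
exact: addNr.
Qed.

End Series.

Definition rank_sum {T : Type} (rho : T -> nat) (s : seq T) : nat :=
  \sum_(p <- s) rho p.

Lemma rank_sum_cons (T : Type) (rho : T -> nat) x s :
  rank_sum rho (x :: s) = (rho x + rank_sum rho s)%N.
Proof. exact: big_cons. Qed.

Lemma rho_le_rank_sum (T : eqType) (rho : T -> nat) x s :
  x \in s -> (rho x <= rank_sum rho s)%N.
Proof. by move=> xs; rewrite /rank_sum (big_rem x xs) leq_addr. Qed.

Section MaximalChain.
Variables (d : Order.disp_t) (T : porderType d).
Local Open Scope classical_set_scope.

Lemma exists_maximal_chain (C : set T) : is_chain C ->
  exists D, maximal_chain D /\ C `<=` D.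
Proof.
move=> C_chain.
have [|A [CA_chain A_max]] := @Zorn_bigcup T [set D | is_chain (C `|` D)].
  move=> F F_chain F_tot x y [Cx|[X FX Xx]] [Cy|[Y FY Yy]].
  - exact: C_chain.
  - by apply: (F_chain Y FY); [left|right].
  - by apply: (F_chain X FX); [right|left].
  - case: (F_tot X Y FX FY) => [XY|YX].
    + by apply: (F_chain Y FY); right => //; apply: XY.
    + by apply: (F_chain X FX); right => //; apply: YX.
exists (C `|` A); split; last by move=> x Cx; left.
split => // E E_chain CAE.
have CE_chain : is_chain (C `|` E).
  by move=> x y [Cx|Ex] [Cy|Ey]; apply: E_chain => //; apply: CAE; left.
have AE : A `<=` E by move=> x Ax; apply: CAE; right.
have EA : E `<=` A.
  by apply: contrapT => nEA; exact: (A_max E (conj AE nEA) CE_chain).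
by apply/seteqP; split => // x /EA; right.
Qed.

End MaximalChain.

Section GradedPoset.
Variables (d : Order.disp_t) (T : porderType d) (rho : T -> nat) (z : T).
Hypothesis z_min : forall p : T, (z <= p)%O.
Hypothesis rho_graded : N_graded rho.
Local Open Scope order_scope.

Lemma covers_chain_lt (c : nat -> T) : (forall i, covers (c i) (c i.+1)) ->
  {homo c : i j / (i < j)%N >-> i < j}.
Proof.
move=> c_cov i; elim=> // j IHj; rewrite ltnS leq_eqVlt => /orP[/eqP ->|/IHj lt_ij].
  by case: (c_cov j).
by apply: lt_trans lt_ij _; case: (c_cov j).
Qed.

Lemma covers_chain_le (c : nat -> T) : (forall i, covers (c i) (c i.+1)) ->
  {homo c : i j / (i <= j)%N >-> i <= j}.
Proof. by move/covers_chain_lt/ltW_homo. Qed.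

Lemma rank_chain_through a b : a <= b ->
  exists c : nat -> T, (forall i, covers (c i) (c i.+1) /\ rho (c i) = i) /\
    [/\ c 0%N = z, c (rho a) = a & c (rho b) = b].
Proof.
move=> le_ab.
have zab_chain : is_chain [set x | x = z \/ x = a \/ x = b].
  by move=> x y [->|[->|->]] [->|[->|->]]; rewrite ?z_min ?lexx ?le_ab; auto.
have [D [D_max zab_D]] := exists_maximal_chain zab_chain.
have [c [cD c_rank]] := rho_graded D_max.
have c_rho x : D x -> c (rho x) = x by move=> /cD [i <-]; rewrite (c_rank i).2.
exists c; split => //; split.
- have [k ck] := (cD z).1 (zab_D z (or_introl erefl)).
  apply/le_anti; rewrite z_min andbT -ck; apply: covers_chain_le => //.
  by move=> i; case: (c_rank i).
- by apply/c_rho/zab_D; right; left.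
- by apply/c_rho/zab_D; right; right.
Qed.

Lemma rho_min : rho z = 0%N.
Proof.
have [c [c_rank [c0 _ _]]] := rank_chain_through (lexx z).
by rewrite -c0 (c_rank 0%N).2.
Qed.

Lemma rho_eq0 p : rho p = 0%N -> p = z.
Proof.
by move=> rho_p; have [c [_ [c0 _ cp]]] := rank_chain_through (z_min p); rewrite -cp rho_p.
Qed.

Lemma rho_covers a b : covers a b -> rho b = (rho a).+1.
Proof.
move=> [lt_ab no_mid]; have [c [c_rank [_ ca cb]]] := rank_chain_through (ltW lt_ab).
have c_cov i : covers (c i) (c i.+1) by case: (c_rank i).
have lt_rho : (rho a < rho b)%N.
  rewrite ltnNge; apply/negP => /(covers_chain_le c_cov); rewrite ca cb => le_ba.
  by move: (lt_le_trans lt_ab le_ba); rewrite ltxx.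
apply/eqP; rewrite eqn_leq lt_rho andbT leqNgt; apply/negP => lt_ab1.
apply: no_mid; exists (c (rho a).+1); split.
- by rewrite -{1}ca; apply: covers_chain_lt.
- by rewrite -cb; apply: covers_chain_lt.
Qed.

Lemma rank_gf0 : rank_gf rho 0 = 1%R.
Proof.
rewrite /rank_gf (_ : [set p | rho p = 0%N] = [set z])%classic.
  by rewrite /card_set fset_set1 cardfs1.
by apply/seteqP; split => p /=; [move/rho_eq0 | move->; rewrite rho_min].
Qed.

Section FilterIso.
Variables (q : T) (f : T -> T).
Hypothesis iso_ge : forall x, q <= f x.
Hypothesis iso_onto : forall y, q <= y -> exists x, f x = y.
Hypothesis iso_le : forall x y, x <= y <-> f x <= f y.

Lemma iso_leE x y : (f x <= f y) = (x <= y).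
Proof. by case: (iso_le x y) => le_f f_le; apply/idP/idP. Qed.

Lemma iso_inj : injective f.
Proof. by move=> x y fxy; apply/le_anti; rewrite -[x <= y]iso_leE -[y <= x]iso_leE fxy lexx. Qed.

Lemma iso_ltE x y : (f x < f y) = (x < y).
Proof. by rewrite !lt_neqAle iso_leE (inj_eq iso_inj). Qed.

Lemma iso_min : f z = q.
Proof.
have [x fx] := iso_onto (lexx q).
by apply/le_anti; rewrite iso_ge -fx iso_leE z_min.
Qed.

Lemma iso_covers a b : covers a b -> covers (f a) (f b).
Proof.
move=> [lt_ab no_mid]; split; first by rewrite iso_ltE.
move=> [y [lt_fay lt_yfb]]; have [x fx] := iso_onto (le_trans (iso_ge a) (ltW lt_fay)).
by apply: no_mid; exists x; rewrite -(iso_ltE a) -(iso_ltE x) fx.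
Qed.

Lemma rho_iso x : rho (f x) = (rho q + rho x)%N.
Proof.
have [c [c_rank [c0 _ cx]]] := rank_chain_through (z_min x).
suff rho_fc i : rho (f (c i)) = (rho q + i)%N by rewrite -{1}cx rho_fc.
elim: i => [|i IHi]; first by rewrite c0 iso_min addn0.
by rewrite (rho_covers (iso_covers (c_rank i).1)) IHi addnS.
Qed.

Lemma rank_sum_iso s : rank_sum rho (map f s) = (size s * rho q + rank_sum rho s)%N.
Proof.
elim: s => [|x s IHs]; first by rewrite /rank_sum !big_nil.
by rewrite /= !rank_sum_cons IHs rho_iso mulSn; lia.
Qed.

End FilterIso.

Lemma rho_homo : @upho d T -> {homo rho : p x / p <= x >-> (p <= x)%N}.
Proof.
move=> T_upho p x le_px; have [f [f_ge [f_onto f_le]]] := T_upho p.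
by have [y <-] := f_onto x le_px; rewrite (rho_iso f_ge f_onto f_le) leq_addr.
Qed.

End GradedPoset.

Section MeetSeq.
Variables (d : Order.disp_t) (T : meetSemilatticeType d).
Local Open Scope order_scope.

Lemma le_meet_seq (w dflt : T) s : s != [::] ->
  (w <= meet_seq s dflt) = all (fun y => w <= y) s.
Proof.
case: s => // x s _ /=; elim: s x => [|y s IHs] x /=; first by rewrite andbT.
by rewrite IHs lexI andbA.
Qed.

Variables (q : T) (f : T -> T).
Hypothesis iso_ge : forall x, q <= f x.
Hypothesis iso_onto : forall y, q <= y -> exists x, f x = y.
Hypothesis iso_le : forall x y, x <= y <-> f x <= f y.

Lemma iso_meet x y : f (x `&` y) = f x `&` f y.
Proof.
have [w fw] : exists w, f w = f x `&` f y by apply: iso_onto; rewrite lexI !iso_ge.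
rewrite -fw; apply/le_anti/andP; split.
- by rewrite fw lexI !(iso_leE iso_le) leIl leIr.
- by rewrite (iso_leE iso_le) lexI -[w <= x](iso_leE iso_le) -[w <= y](iso_leE iso_le) fw leIl leIr.
Qed.

Lemma iso_meet_seq (dflt : T) s : s != [::] ->
  f (meet_seq s dflt) = meet_seq (map f s) dflt.
Proof. by case: s => // x s _ /=; elim: s x => //= y s IHs x; rewrite IHs iso_meet. Qed.

End MeetSeq.

Section ListCounting.

Lemma count_sum (U : Type) (P : pred U) (s : seq U) : count P s = \sum_(x <- s) P x.
Proof. by rewrite -sumn_count sumnE big_map. Qed.

Lemma sum_nat_delta N k (F : nat -> nat) :
  \sum_(j < N) (j == k :> nat) * F j = (k < N) * F k.
Proof.
elim: N => [|N IHN]; first by rewrite big_ord0.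
rewrite big_ord_recr /= IHN; case: (ltngtP k N) => [lt_kN|lt_Nk|->].
- by rewrite ltnS (ltnW lt_kN) mul0n addn0.
- by rewrite ltnS leqNgt lt_Nk.
- by rewrite ltnSn.
Qed.

Lemma count_addn_eq (U : Type) (P : pred U) (g : U -> nat) i n (l : seq U) :
  count (fun s => P s && (i + g s == n)) l =
  (i <= n) * count (fun s => P s && (g s == n - i)) l.
Proof.
case: leqP => [le_in|lt_ni]; rewrite ?mul1n ?mul0n.
  by apply: eq_count => s; congr (_ && _); lia.
by rewrite (@eq_count _ _ pred0) ?count_pred0 // => s; case: (P s) => //=; lia.
Qed.

Lemma count_fiber (U V : eqType) (g : U -> V) (L : seq V) (P : pred U) (l : seq U) :
  uniq L -> {in l, forall s, g s \in L} ->
  count P l = \sum_(q <- L) count (fun s => (g s == q) && P s) l.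
Proof.
move=> uniqL gL; rewrite count_sum.
under [RHS]eq_bigr => q _ do rewrite count_sum.
rewrite exchange_big; apply: eq_big_seq => s /gL gsL.
rewrite (eq_bigr (fun q => P s * (q == g s))) => [|q _]; last first.
  by rewrite mulnC mulnb eq_sym.
by rewrite -big_distrr -count_sum /= (count_uniq_mem _ uniqL) gsL muln1.
Qed.

Lemma eq_count_uniq (U : eqType) (P : pred U) (s1 s2 : seq U) :
  uniq s1 -> uniq s2 ->
  {in s1, forall x, P x -> x \in s2} -> {in s2, forall x, P x -> x \in s1} ->
  count P s1 = count P s2.
Proof.
move=> uniq1 uniq2 sub12 sub21; rewrite -!size_filter.
apply: perm_size; apply: uniq_perm; rewrite ?filter_uniq // => x; rewrite !mem_filter.
by apply/andP/andP => -[Px xs]; split => //; [exact: sub12 | exact: sub21].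
Qed.

Lemma card_set_count (U : choiceType) (A : set U) (s : seq U) :
  uniq s -> (forall x, A x -> x \in s) ->
  card_set A = count (fun x => `[< A x >]) s.
Proof.
move=> uniq_s As.
have finA : finite_set A.
  by apply: (@sub_finite_set _ _ [set` s]); [move=> x /As | exact: finite_seq].
rewrite /card_set -size_filter; apply/perm_size/uniq_perm.
- exact: fset_uniq.
- exact: filter_uniq.
move=> x; rewrite in_fset_set // mem_filter.
rewrite (_ : (x \in A) = `[< A x >]); last by apply/idP/asboolP => [/set_mem|/mem_set].
by apply/idP/idP => [Ax|/andP[]//]; rewrite Ax As //; apply/asboolP.
Qed.

Fixpoint tuples_of (U : Type) (L : seq U) (k : nat) : seq (seq U) :=
  if k is k'.+1 then [seq x :: s | x <- L, s <- tuples_of L k'] else [:: [::]].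

Lemma mem_tuples_of (U : eqType) (L : seq U) k s :
  (s \in tuples_of L k) = (size s == k) && all (mem L) s.
Proof.
elim: k s => [|k IHk] [|x s] //=; first by apply/allpairsP => -[[y t] [_ _]].
apply/allpairsP/idP => [[[y t] /= [yL tk [-> ->]]]|/andP[sk /andP[xL sL]]].
  by rewrite eqSS yL /= -IHk.
by exists (x, s); split => //; rewrite IHk -eqSS sk.
Qed.

Lemma uniq_tuples_of (U : eqType) (L : seq U) k : uniq L -> uniq (tuples_of L k).
Proof.
move=> uniqL; elim: k => [|k IHk] //=.
by apply: allpairs_uniq => // -[x s] [y t] _ _ /= [-> ->].
Qed.

Lemma count_tuples_of_cons (U : Type) (L : seq U) k (P : pred (seq U)) :
  count P (tuples_of L k.+1) = \sum_(x <- L) count (fun s => P (x :: s)) (tuples_of L k).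
Proof.
rewrite /= count_flatten sumnE !big_map; apply: eq_bigr => x _.
by rewrite count_map.
Qed.

Lemma card_tuple_set (U : choiceType) (L : seq U) k (Q : seq U -> Prop)
    (P : pred (seq U)) : uniq L ->
  (forall s, size s = k -> Q s <-> P s) ->
  (forall s, size s = k -> P s -> all (mem L) s) ->
  card_set [set t : k.-tuple U | Q t] = count P (tuples_of L k).
Proof.
move=> uniqL QP PL.
rewrite (@card_set_count _ _ (pmap insub (tuples_of L k))).
- rewrite (@eq_count _ _ (P \o val)); last first.
    by move=> t /=; apply/asboolP/idP => /(QP _ (size_tuple t)).
  rewrite -count_map (pmap_filter (insubK _)).
  suff -> : [seq s <- tuples_of L k | insub s : option (k.-tuple U)] = tuples_of L k by [].
  apply/all_filterP/allP => s; rewrite mem_tuples_of => /andP[/eqP sk _].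
  by case: insubP => // /negP; rewrite /= sk eqxx.
- exact: pmap_sub_uniq (uniq_tuples_of _ uniqL).
- move=> t Qt; rewrite mem_pmap_sub mem_tuples_of size_tuple eqxx /=.
  by apply: PL; [exact: size_tuple | apply/(QP _ (size_tuple t))].
Qed.

Lemma exists_map_preimage (U V : Type) (f : U -> V) (P : pred V) :
  (forall y, P y -> exists x, f x = y) ->
  forall s, all P s -> exists s0, map f s0 = s.
Proof.
move=> f_onto; elim=> [|y s IHs] /=; first by exists [::].
by case/andP => /f_onto [x <-] /IHs [s0 <-]; exists (x :: s0).
Qed.

(* The coefficient of x^n in F(x^m) G(x), summed once over the degree j of the
   F-factor and once over i = m j. *)
Lemma sum_multiples (a G : nat -> nat) m n : (0 < m)%N ->
  \sum_(j < n.+1) a j * ((m * j <= n) * G (n - m * j)) =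
  \sum_(i < n.+1) (if m %| i then a (i %/ m) else 0) * G (n - i).
Proof.
move=> m_gt0; symmetry.
transitivity (\sum_(i < n.+1) \sum_(j < n.+1)
                 (i == m * j :> nat) * (a j * G (n - m * j))).
  apply: eq_bigr => -[i /=]; rewrite ltnS => le_in _; case: ifP => [m_dvd|m_ndvd].
    rewrite (eq_bigr (fun j : 'I_n.+1 => (j == i %/ m :> nat) * (a j * G (n - m * j)))).
      rewrite (sum_nat_delta _ _ (fun j => a j * G (n - m * j))) [m * _]mulnC divnK //.
      by rewrite ltnS (leq_trans (leq_div i m)) ?mul1n.
    move=> j _; congr (_ * _).
    by rewrite -{1}(divnK m_dvd) mulnC eqn_pmul2l // eq_sym.
  rewrite mul0n big1 // => j _; rewrite (_ : (i == m * j :> nat) = false) //.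
  by apply: contraFF m_ndvd => /eqP ->; exact: dvdn_mulr.
rewrite exchange_big; apply: eq_bigr => j _.
by rewrite (sum_nat_delta _ _ (fun _ => a j * G (n - m * j))) ltnS mulnCA.
Qed.

End ListCounting.

Lemma finite_rank_le (d : Order.disp_t) (T : porderType d) (rho : T -> nat) N :
  finite_type rho -> finite_set [set p : T | (rho p <= N)%N].
Proof.
move=> rho_fin; elim: N => [|N IHN].
  apply: (@sub_finite_set _ _ [set p : T | rho p = 0%N]); last exact: rho_fin.
  by move=> p /=; rewrite leqn0 => /eqP.
apply: (@sub_finite_set _ _ ([set p : T | (rho p <= N)%N] `|` [set p | rho p = N.+1])).
  by move=> p /=; rewrite leq_eqVlt ltnS => /orP[/eqP ->|]; [right|left].
by rewrite finite_setU; split => //; exact: rho_fin.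
Qed.

Section MeetZeroCount.
Variables (d : Order.disp_t) (T : meetSemilatticeType d) (rho : T -> nat) (z : T).
Hypothesis z_min : forall p : T, (z <= p)%O.
Hypothesis rho_graded : N_graded rho.
Hypothesis rho_fin : finite_type rho.
Hypothesis T_upho : @upho d T.
Variables (m n : nat).
Hypothesis m_gt0 : (0 < m)%N.

(* Everything contributing to the coefficient of x^n lives in rank <= n. *)
Let L : seq T := fset_set [set p : T | (rho p <= n)%N].
Let rank_count j := count (fun p => rho p == j) L.
Let meet_zero_count n' :=
  count (fun s => (meet_seq s z == z) && (rank_sum rho s == n')) (tuples_of L m).

Lemma mem_L p : (p \in L) = (rho p <= n)%N.
Proof.
rewrite /L in_fset_set; last exact: finite_rank_le.
by apply/idP/idP => [/set_mem|le_pn] //; apply/mem_set.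
Qed.

Lemma uniq_L : uniq L.
Proof. exact: fset_uniq. Qed.

Lemma all_mem_L s : (rank_sum rho s <= n)%N -> all (mem L) s.
Proof.
move=> le_sn; apply/allP => x xs; rewrite /= mem_L.
exact: leq_trans (rho_le_rank_sum rho xs) le_sn.
Qed.

Lemma rank_gfE j : (j <= n)%N -> rank_gf rho j = (rank_count j)%:R%R.
Proof.
move=> le_jn; rewrite /rank_gf (@card_set_count _ _ L).
- by congr _%:R%R; apply: eq_count => x; apply/asboolP/eqP.
- exact: uniq_L.
- by move=> x /= rho_x; rewrite mem_L rho_x.
Qed.

Lemma sum_L_rank (H : nat -> nat) :
  \sum_(q <- L) H (rho q) = \sum_(j < n.+1) rank_count j * H j.
Proof.
rewrite (eq_big_seq (fun q => \sum_(j < n.+1) (j == rho q :> nat) * H j)); last first.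
  by move=> q qL; rewrite sum_nat_delta ltnS -mem_L qL mul1n.
rewrite exchange_big; apply: eq_bigr => j _.
by rewrite /rank_count count_sum big_distrl; apply: eq_bigr => q _; rewrite eq_sym.
Qed.

Lemma spow_rank_gfE k n' : (n' <= n)%N ->
  spow (rank_gf rho) k n' = (count (fun s => rank_sum rho s == n') (tuples_of L k))%:R%R.
Proof.
elim: k n' => [|k IHk] n' le_n'n.
  by rewrite /spow /sone /= /rank_sum big_nil; case: n' le_n'n.
rewrite [spow _ _]/spow /= -/(spow (rank_gf rho) k) /smul.
rewrite (eq_bigr (fun i : 'I_n'.+1 =>
   (rank_count i * count (fun s => rank_sum rho s == n' - i) (tuples_of L k))%N%:R%R)).
  have cons_count x : count (fun s => rank_sum rho (x :: s) == n') (tuples_of L k) =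
      (rho x <= n') * count (fun s => rank_sum rho s == n' - rho x) (tuples_of L k).
    rewrite (@eq_count _ _ (fun s => true && (rho x + rank_sum rho s == n'))).
      by rewrite count_addn_eq.
    by move=> s; rewrite rank_sum_cons.
  rewrite -natr_sum count_tuples_of_cons; congr _%:R%R.
  under [RHS]eq_bigr => x _ do rewrite cons_count.
  rewrite (sum_L_rank (fun j => (j <= n') * count (fun s => rank_sum rho s == n' - j)
      (tuples_of L k))) (big_ord_widen n.+1 (fun i => rank_count i *
      count (fun s => rank_sum rho s == n' - i) (tuples_of L k))) // big_mkcond /=.
  by apply: eq_bigr => i _; rewrite ltnS; case: (i <= n'); rewrite ?mul1n ?mul0n ?muln0.
move=> -[i /= lt_in'] _; rewrite ltnS in lt_in'.
rewrite rank_gfE ?IHk ?natrM //; first exact: leq_trans (leq_subr _ _) le_n'n.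
exact: leq_trans lt_in' le_n'n.
Qed.

Lemma meet_zero_gfE n' : (n' <= n)%N -> meet_zero_gf rho z m n' = (meet_zero_count n')%:R%R.
Proof.
move=> le_n'n; rewrite /meet_zero_gf (@card_tuple_set _ L m
  (fun s => meet_seq s z = z /\ (\sum_(p <- s) rho p)%N = n')
  (fun s => (meet_seq s z == z) && (rank_sum rho s == n'))) //.
- exact: uniq_L.
- move=> s _; split => [[-> sum_s]|/andP[/eqP -> /eqP <-]] //.
  by rewrite /rank_sum sum_s !eqxx.
- by move=> s _ /andP[_ /eqP sum_s]; apply: all_mem_L; rewrite sum_s.
Qed.

Lemma meet_seq_in_L s : s \in tuples_of L m -> meet_seq s z \in L.
Proof.
rewrite mem_tuples_of => /andP[/eqP s_m /allP sL].
case: s s_m sL => [m0|x s _ sL]; first by move: m_gt0; rewrite -m0.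
have /andP[le_meet_x _] : all (fun y => meet_seq (x :: s) z <= y)%O (x :: s).
  by rewrite -(le_meet_seq _ z).
rewrite mem_L; apply: leq_trans (rho_homo z_min rho_graded T_upho le_meet_x) _.
by rewrite -mem_L; apply: sL; exact: mem_head.
Qed.

Lemma count_meet_eq q :
  count (fun s => (meet_seq s z == q) && (rank_sum rho s == n)) (tuples_of L m) =
  count (fun s => (meet_seq s z == z) && (m * rho q + rank_sum rho s == n))
    (tuples_of L m).
Proof.
have [f [f_ge [f_onto f_le]]] := T_upho q.
have f_min : f z = q := iso_min z_min f_ge f_onto f_le.
have f_sum := rank_sum_iso z_min rho_graded f_ge f_onto f_le.
have size_m s : s \in tuples_of L m -> size s = m.
  by rewrite mem_tuples_of => /andP[/eqP].
have nonempty s : size s = m -> s != [::] by move=> s_m; rewrite -size_eq0 s_m -lt0n.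
rewrite (@eq_count_uniq _ _ _ (map (map f) (tuples_of L m))).
- rewrite count_map; apply: eq_in_count => s /size_m s_m /=.
  rewrite -(iso_meet_seq f_ge f_onto f_le) ?nonempty // -{1}f_min.
  by rewrite (inj_eq (iso_inj f_le)) f_sum s_m.
- exact: uniq_tuples_of uniq_L.
- by rewrite map_inj_uniq ?uniq_tuples_of ?uniq_L //; exact/inj_map/iso_inj.
- move=> s s_in /andP[/eqP meet_q /eqP sum_n].
  have s_ge : all (fun y => q <= y)%O s.
    by rewrite -(le_meet_seq _ z) ?nonempty ?size_m // meet_q lexx.
  have [s0 s0E] := exists_map_preimage f_onto s_ge.
  apply/mapP; exists s0 => //; rewrite mem_tuples_of -(size_map f) s0E size_m //= eqxx /=.
  by apply: all_mem_L; rewrite -sum_n -s0E f_sum; exact: leq_addl.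
- move=> _ /mapP[s0 s0_in ->] /andP[_ /eqP sum_n].
  by rewrite mem_tuples_of size_map size_m //= all_mem_L ?sum_n ?eqxx.
Qed.

Lemma spow_rank_gf_coef :
  spow (rank_gf rho) m n = smul (ssubst_pow (rank_gf rho) m) (meet_zero_gf rho z m) n.
Proof.
rewrite spow_rank_gfE // (@count_fiber _ _ (fun s => meet_seq s z) L _ _ uniq_L);
  last exact: meet_seq_in_L.
under eq_bigr => q _ do rewrite count_meet_eq (count_addn_eq (fun s => meet_seq s z == z)).
rewrite (sum_L_rank (fun j => (m * j <= n) * meet_zero_count (n - m * j))) sum_multiples //.
rewrite natr_sum; apply: eq_bigr => -[i /=]; rewrite ltnS => le_in _.
rewrite meet_zero_gfE ?leq_subr // /ssubst_pow; case: (m %| i); last by rewrite mul0n mul0r.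
by rewrite natrM rank_gfE // (leq_trans (leq_div i m)).
Qed.

End MeetZeroCount.

Unset Implicit Arguments.

Theorem corollary2 (d : Order.disp_t) (T : meetSemilatticeType d)
  (rho : T -> nat) (z : T)
  (hmin : forall p : T, (z <= p)%O)
  (hgr : N_graded rho) (hfin : finite_type rho) (hup : @upho d T)
  (m : nat) (hm : (1 <= m)%N) :
  meet_zero_gf rho z m =
  smul (spow (rank_gf rho) m) (sinv (ssubst_pow (rank_gf rho) m)).
Proof.
have subst0 : ssubst_pow (rank_gf rho) m 0 = 1%R.
  by rewrite /ssubst_pow dvdn0 div0n (rank_gf0 hmin hgr).
have -> : spow (rank_gf rho) m = smul (ssubst_pow (rank_gf rho) m) (meet_zero_gf rho z m).
  by apply: funext => n; exact: spow_rank_gf_coef.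
by rewrite (smulC (ssubst_pow _ _)) smulA smul_sinv ?subst0 ?oner_eq0 // smul_sone.
Qed.
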